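(* Let $\mathfrak a\subset K$ be a fractional $A_{\infty_1}$-ideal having an $\mathbb F_q$-basis $(\alpha_0=1,\alpha_1,\alpha_2,\dots)$ with $1<|\alpha_1|<|\alpha_2|<\cdots$. For $i\ge1$ and $m\in\mathbb N$ set \[\Omega_i^{\mathfrak a}(m)=\sum_{(c_0,\dots,c_{i-1})\in\mathbb F_q^i}\big(c_0+c_1\alpha_1+\dots+c_{i-1}\alpha_{i-1}+\alpha_i\big)^{-m}.\] Then for every $n\in\mathbb N$, $n\ge1$: (1) $\displaystyle\Omega_1^{\mathfrak a}(q^n-1)=\frac{\alpha_1^{q^n}-\alpha_1}{\prod_{c\in\mathbb F_q}(c+\alpha_1^{q^n})}$ and $|\Omega_1^{\mathfrak a}(q^n-1)|=|\alpha_1|^{q^n(1-q)}$; (2) for all $i\ge1$, $|\Omega_i^{\mathfrak a}(q^n-1)|\le|\alpha_i|^{q^n(1-q)}$.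
   Context: Let $q$ be a prime power, $k=\mathbb F_q(T)$, $A=\mathbb F_q[T]$, $k_\infty=\mathbb F_q((1/T))$ with $|x|=q^{\deg_T x}$. Let $f\in k_\infty\setminus k$ be a root of $X^2-aX-b$ with $a\in A$ monic, $d=\deg_T a\ge1$, $b\in\mathbb F_q^*$, $|f|=q^d$. Let $K=k(f)\subset k_\infty$ (absolute values of elements of $K$ are computed in $k_\infty$), and $A_{\infty_1}=\mathbb F_q[f,fT,\dots,fT^{d-1}]$ the ring of elements of $K$ regular away from the place induced by $K\subset k_\infty$. *)

From HB Require Import structures.
From mathcomp Require Import all_boot all_order all_algebra.
From mathcomp Require Import reals.
Set Implicit Arguments. Unset Strict Implicit. Unset Printing Implicit Defensive.
Import Order.TTheory GRing.Theory Num.Theory.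
Local Open Scope ring_scope.

(* The ambient field L (a model of k_oo = F_q((1/T))) receives F_q through
   [iota]; [T] is the element T of L. *)

Definition evT (F : finFieldType) (L : fieldType) (iota : {rmorphism F -> L})
  (T : L) (p : {poly F}) : L := (map_poly iota p).[T].

Definition in_k (F : finFieldType) (L : fieldType) (iota : {rmorphism F -> L})
  (T x : L) : Prop :=
  exists p r : {poly F}, evT iota T r != 0 /\ x = evT iota T p / evT iota T r.

(* x lies in K = k(f) (f quadratic over k) *)
Definition in_K (F : finFieldType) (L : fieldType) (iota : {rmorphism F -> L})
  (T f x : L) : Prop :=
  exists u v : L, in_k iota T u /\ in_k iota T v /\ x = u + v * f.

Inductive in_Ainf1 (F : finFieldType) (L : fieldType) (iota : {rmorphism F -> L})
  (T f : L) (d : nat) : L -> Prop :=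
| Ainf1_const (c : F) : in_Ainf1 iota T f d (iota c)
| Ainf1_gen (j : nat) : (j < d)%N -> in_Ainf1 iota T f d (f * T ^+ j)
| Ainf1_add (x y : L) : in_Ainf1 iota T f d x -> in_Ainf1 iota T f d y ->
    in_Ainf1 iota T f d (x + y)
| Ainf1_mul (x y : L) : in_Ainf1 iota T f d x -> in_Ainf1 iota T f d y ->
    in_Ainf1 iota T f d (x * y).

Definition is_nonarch_abs (R : realType) (L : fieldType) (abs : L -> R) : Prop :=
  [/\ forall x, 0 <= abs x,
      forall x, (abs x == 0) = (x == 0),
      forall x y, abs (x * y) = abs x * abs y &
      forall x y, abs (x + y) <= Num.max (abs x) (abs y)].

Definition abs_complete (R : realType) (L : fieldType) (abs : L -> R) : Prop :=
  forall u : nat -> L,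
    (forall e : R, 0 < e -> exists N, forall m n, (N <= m)%N -> (N <= n)%N ->
        abs (u m - u n) < e) ->
    exists l, forall e : R, 0 < e -> exists N, forall n, (N <= n)%N ->
        abs (u n - l) < e.

Definition k_dense (R : realType) (F : finFieldType) (L : fieldType)
  (iota : {rmorphism F -> L}) (T : L) (abs : L -> R) : Prop :=
  forall (x : L) (e : R), 0 < e -> exists y, in_k iota T y /\ abs (x - y) < e.

(* (L, abs, iota, T) is (an isometric copy of) k_oo = F_q((1/T)) with |x| = q^{deg_T x} *)
Definition is_k_infty (R : realType) (F : finFieldType) (L : fieldType)
  (iota : {rmorphism F -> L}) (T : L) (abs : L -> R) : Prop :=
  [/\ is_nonarch_abs abs,
      forall c : F, c != 0 -> abs (iota c) = 1,
      abs T = (#|F|)%:R,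
      abs_complete abs &
      k_dense iota T abs].

Definition frac_Ainf1_ideal (F : finFieldType) (L : fieldType)
  (iota : {rmorphism F -> L}) (T f : L) (d : nat) (P : L -> Prop) : Prop :=
  [/\ forall x, P x -> in_K iota T f x,
      forall x y, P x -> P y -> P (x + y),
      forall r x, in_Ainf1 iota T f d r -> P x -> P (r * x),
      exists x, P x /\ x != 0 &
      exists c, [/\ in_Ainf1 iota T f d c, c != 0 &
                    forall x, P x -> in_Ainf1 iota T f d (c * x)]].

Definition is_Fq_basis (F : finFieldType) (L : fieldType)
  (iota : {rmorphism F -> L}) (P : L -> Prop) (alpha : nat -> L) : Prop :=
  [/\ alpha 0%N = 1,
      forall (n : nat) (c : nat -> F),
        \sum_(j < n) iota (c j) * alpha j = 0 -> forall j, (j < n)%N -> c j = 0 &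
      forall x, P x <-> exists (n : nat) (c : nat -> F),
        x = \sum_(j < n) iota (c j) * alpha j].

Definition Omega (F : finFieldType) (L : fieldType) (iota : {rmorphism F -> L})
  (alpha : nat -> L) (i m : nat) : L :=
  \sum_(c : {ffun 'I_i -> F}) (\sum_(j < i) iota (c j) * alpha j + alpha i) ^- m.

(* Since x |-> x^(q^n) is F_q-linear and x^-(q^n - 1) = x / x^(q^n), summing over one
   coordinate at a time with prod_(c in F_q) (Z + c a) = Z^q - a^(q-1) Z yields
   Omega_i(q^n - 1) = (alpha_i - T_i(w_i)) D_i / E_i(w_i), where w_j = alpha_j^(q^n),
   E_i is the subspace polynomial of w_0, ..., w_(i-1), D_i its coefficient of Y and
   T_i the F_q-linear interpolant w_j |-> alpha_j.  For the ultrametric absolute value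
   the leading term of E_i dominates, so |E_i(w_i)| = |w_i|^(q^i), while an induction
   bounds the numerator by |w_i|^(q^i - q + 1); hence |Omega_i| <= |w_i|^(1 - q), with
   equality for i = 1, where everything is explicit. *)

From HB Require Import structures.
From mathcomp Require Import all_boot all_order all_algebra.
From mathcomp Require Import reals.
From mathcomp Require Import finfield abelian pgroup.
From mathcomp Require Import ring zify.
Set Implicit Arguments. Unset Strict Implicit. Unset Printing Implicit Defensive.
Import Order.TTheory GRing.Theory Num.Theory.
Local Open Scope ring_scope.

Lemma card_finFieldSS (F : finFieldType) : exists k, #|F| = k.+2.
Proof. by exists #|F|.-2; have := finNzRing_gt1 F; case: #|F| => [|[|]]. Qed.

Section FrobeniusOverFq.
Variables (F : finFieldType) (L : fieldType) (iota : {rmorphism F -> L}).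
Local Notation q := #|F|.

Lemma card_pchar_pow : exists2 p, p \in [pchar L] & exists e, q = (p ^ e.+1)%N.
Proof.
have [p _ pF] := finPcharP F.
exists p; first exact: rmorph_pchar pF.
have := abelem_pgroup (fin_ring_pchar_abelem pF).
rewrite /pgroup cardsT => /p_natP[[|e] qe]; last by exists e.
by have := finNzRing_gt1 F; rewrite qe.
Qed.

Lemma card_pchar_nat : [pchar L].-nat q.
Proof.
have [p pL [e ->]] := card_pchar_pow.
by rewrite pnatX (pnatE _ (pcharf_prime pL)) pL.
Qed.

Lemma natr_card : q%:R = 0 :> L.
Proof.
by have [p pL [e ->]] := card_pchar_pow; rewrite natrX (pcharf0 pL) exprS mul0r.
Qed.

Lemma frobD k (x y : L) : (x + y) ^+ (q ^ k) = x ^+ (q ^ k) + y ^+ (q ^ k).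
Proof. by apply: exprDn_pchar; rewrite pnatX card_pchar_nat. Qed.

Lemma frobC k (c : F) : iota c ^+ (q ^ k) = iota c.
Proof.
rewrite -rmorphXn; congr (iota _).
by elim: k => [|k IHk]; rewrite ?expr1 // expnSr exprM IHk expf_card.
Qed.

Lemma frobZ k (c : F) (x : L) : (iota c * x) ^+ (q ^ k) = iota c * x ^+ (q ^ k).
Proof. by rewrite exprMn frobC. Qed.

End FrobeniusOverFq.

Section SumsOverFq.
Variables (F : finFieldType) (L : fieldType) (iota : {rmorphism F -> L}).
Local Notation q := #|F|.

Lemma prod_XaddC : \prod_(c : F) ('X + (iota c)%:P) = 'X^q - 'X :> {poly L}.
Proof.
have := congr1 (map_poly iota) (finField_genPoly F).
rewrite rmorphB /= map_polyXn map_polyX rmorph_prod /= => ->.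
rewrite (reindex_inj (@oppr_inj F)) /=.
by apply: eq_bigr => c _; rewrite map_polyXsubC rmorphN polyCN.
Qed.

Lemma prod_addC (W : L) : \prod_(c : F) (W + iota c) = W ^+ q - W.
Proof.
have := congr1 (horner^~ W) prod_XaddC; rewrite horner_prod !hornerE => <-.
by apply: eq_bigr => c _; rewrite !hornerE.
Qed.

Lemma sum_inv_logder (s : seq L) (W : L) :
  let P := \prod_(x <- s) ('X + x%:P) in
  P.[W] != 0 -> \sum_(x <- s) (W + x)^-1 = P^`().[W] / P.[W].
Proof.
elim: s => [|x s IHs] /=; first by rewrite !big_nil derivC horner0 mul0r.
rewrite !big_cons derivM !hornerE /= mulf_eq0 negb_or => /andP[nzx nzs].
by rewrite IHs // derivD derivX derivC addr0 !hornerE /=; field; apply/andP.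
Qed.

Lemma sum_inv_addC (W : L) :
  W ^+ q - W != 0 -> \sum_(c : F) (W + iota c)^-1 = - (W ^+ q - W)^-1.
Proof.
have PE : \prod_(x <- map iota (enum F)) ('X + x%:P) = 'X^q - 'X.
  by rewrite big_map big_enum prod_XaddC.
have -> : \sum_(c : F) (W + iota c)^-1 = \sum_(x <- map iota (enum F)) (W + x)^-1.
  by rewrite big_map big_enum.
move=> nzW; rewrite sum_inv_logder PE ?hornerE //.
rewrite derivB derivXn derivX !hornerE hornerMn -mulr_natr (natr_card iota).
by rewrite mulr0 sub0r mulNr mul1r.
Qed.

Lemma scaled_frob_sub (Z a : L) k : a != 0 ->
  a ^+ k.+1 * ((Z / a) ^+ k.+1 - Z / a) = Z ^+ k.+1 - a ^+ k * Z.
Proof.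
move=> a0; have ak : a ^+ k != 0 by rewrite expf_neq0.
by rewrite !exprS exprMn exprVn; field; rewrite a0 ak.
Qed.

Lemma prod_addZ (Z a : L) : \prod_(c : F) (Z + iota c * a) = Z ^+ q - a ^+ q.-1 * Z.
Proof.
have [k qE] := card_finFieldSS F.
have [->|a0] := eqVneq a 0.
  under eq_bigr do rewrite mulr0 addr0.
  by rewrite prodr_const qE expr0n mul0r subr0.
rewrite (eq_bigr (fun c => a * (Z / a + iota c))); last first.
  by move=> c _; rewrite mulrDr mulrCA mulfV // mulr1 [iota c * a]mulrC.
by rewrite big_split /= prodr_const prod_addC qE scaled_frob_sub.
Qed.

Lemma sum_frac_addZ (Z a u b : L) : a != 0 -> Z ^+ q - a ^+ q.-1 * Z != 0 ->
  \sum_(c : F) (u + iota c * b) / (Z + iota c * a) =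
  (u - b * Z / a) * (- a ^+ q.-1) / (Z ^+ q - a ^+ q.-1 * Z).
Proof.
move=> a0; have [k qE] := card_finFieldSS F.
have -> : Z ^+ q - a ^+ q.-1 * Z = a ^+ q * ((Z / a) ^+ q - Z / a).
  by rewrite qE scaled_frob_sub.
set D := (Z / a) ^+ q - Z / a; rewrite mulf_eq0 negb_or => /andP[_ nzD].
have nzWc c : Z / a + iota c != 0.
  by apply: contraNneq nzD; rewrite /D -prod_addC (bigD1 c) //= => ->; rewrite mul0r.
transitivity (\sum_(c : F) ((u - b * (Z / a)) / a * (Z / a + iota c)^-1 + b / a)).
  apply: eq_bigr => c _.
  have Zc : Z + iota c * a = a * (Z / a + iota c).
    by rewrite mulrDr mulrCA mulfV // mulr1 [iota c * a]mulrC.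
  by rewrite Zc; field; rewrite a0 Zc mulf_neq0.
rewrite big_split /= -mulr_sumr sum_inv_addC // sumr_const -mulr_natr.
rewrite (natr_card iota) mulr0 addr0 -/D; clearbody D.
have ak : a ^+ k != 0 by rewrite expf_neq0.
by rewrite qE !exprS /=; field; rewrite a0 ak nzD.
Qed.

End SumsOverFq.

Section SubspacePolynomials.
Variables (F : finFieldType) (L : fieldType) (w : nat -> L).
Local Notation q := #|F|.

(* By [prod_addZ], [subspace_poly j Y] is the product of the [Y + v] over the
   F_q-span [v] of [w 0, ..., w j.-1], and [subspace_deriv j] its coefficient
   of [Y]. *)
Fixpoint subspace_poly (j : nat) (Y : L) : L :=
  if j is k.+1 then
    subspace_poly k Y ^+ q - subspace_poly k (w k) ^+ q.-1 * subspace_poly k Y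
  else Y.

Fixpoint subspace_deriv (j : nat) : L :=
  if j is k.+1 then - subspace_deriv k * subspace_poly k (w k) ^+ q.-1 else 1.

(* Newton interpolation: [interp_lin alpha j] is F_q-linear and maps [w l] to
   [alpha l] for [l < j]. *)
Fixpoint interp_lin (alpha : nat -> L) (j : nat) (Y : L) : L :=
  if j is k.+1 then
    interp_lin alpha k Y
    + (alpha k - interp_lin alpha k (w k)) / subspace_poly k (w k) * subspace_poly k Y
  else 0.

Section NormalizedBasis.
Hypothesis w0 : w 0 = 1.

Lemma subspace_poly1 Y : subspace_poly 1 Y = Y ^+ q - Y.
Proof. by rewrite /= w0 expr1n mul1r. Qed.

Lemma subspace_deriv1 : subspace_deriv 1 = -1.
Proof. by rewrite /= w0 expr1n mulr1. Qed.

Lemma interp_lin1 alpha Y : interp_lin alpha 1 Y = alpha 0 * Y.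
Proof. by rewrite /= w0 subr0 divr1 add0r. Qed.

End NormalizedBasis.

Lemma subspace_derivS j :
  subspace_deriv j.+1 = - subspace_deriv j * subspace_poly j (w j) ^+ q.-1.
Proof. by []. Qed.

Lemma interp_lin_mul_derivS alpha j Y : subspace_poly j (w j) != 0 ->
  interp_lin alpha j.+1 Y * subspace_deriv j.+1 =
  - (interp_lin alpha j Y * subspace_deriv j) * subspace_poly j (w j) ^+ q.-1
  - (alpha j - interp_lin alpha j (w j)) * subspace_deriv j
    * subspace_poly j (w j) ^+ q.-2 * subspace_poly j Y.
Proof.
move=> nza /=; have [r ->] := card_finFieldSS F.
by rewrite exprS; field; rewrite nza.
Qed.

Variable iota : {rmorphism F -> L}.

Definition Fq_linear (g : L -> L) : Prop :=
  forall (c : F) (y z : L), g (y + iota c * z) = g y + iota c * g z.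

Lemma subspace_poly_linear j : Fq_linear (subspace_poly j).
Proof.
elim: j => [//|j IHj] c y z /=.
by rewrite !IHj (frobD iota 1) (frobZ iota 1) expn1; ring.
Qed.

Lemma interp_lin_linear alpha j : Fq_linear (interp_lin alpha j).
Proof.
elim: j => [|j IHj] c y z /=; first by rewrite mulr0 addr0.
by rewrite IHj subspace_poly_linear; ring.
Qed.

End SubspacePolynomials.

Section OmegaRecursion.
Variables (F : finFieldType) (L : fieldType) (iota : {rmorphism F -> L}).
Variable alpha : nat -> L.
Local Notation q := #|F|.

Definition Omega_at (m j : nat) (y : L) : L :=
  \sum_(c : {ffun 'I_j -> F}) (\sum_(l < j) iota (c l) * alpha l + y) ^- m.

Lemma Omega_atS m j y :
  Omega_at m j.+1 y = \sum_(c : F) Omega_at m j (y + iota c * alpha j).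
Proof.
rewrite /Omega_at pair_big /=.
pose glue (p : F * {ffun 'I_j -> F}) : {ffun 'I_j.+1 -> F} :=
  [ffun l => if unlift ord_max l is Some l' then p.2 l' else p.1].
pose split_last (g : {ffun 'I_j.+1 -> F}) : F * {ffun 'I_j -> F} :=
  (g ord_max, [ffun l => g (lift ord_max l)]).
rewrite (reindex glue); last first.
  exists split_last => [[c g] _ | g _]; rewrite /split_last /glue /=.
    rewrite ffunE unlift_none; congr (_, _).
    by apply/ffunP => l; rewrite !ffunE liftK.
  by apply/ffunP => l; rewrite !ffunE; case: unliftP => [l' ->|->]; rewrite ?ffunE.
apply: eq_bigr => -[c g] _ /=.
rewrite big_ord_recr /= ffunE unlift_none [y + _]addrC addrA.
congr ((_ + _ + _) ^- _); apply: eq_bigr => l _.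
have -> : widen_ord (leqnSn j) l = lift ord_max l.
  by apply/val_inj; rewrite /= /bump leqNgt ltn_ord.
by rewrite ffunE liftK.
Qed.

Variable n : nat.
Local Notation N := (q ^ n)%N.
Local Notation w j := (alpha j ^+ N).
Local Notation E := (subspace_poly F (fun j => w j)).
Local Notation D := (subspace_deriv F (fun j => w j)).
Local Notation T := (interp_lin F (fun j => w j) alpha).

Hypothesis nz_subspace_poly_w : forall l, E l (w l) != 0.

Lemma Omega_at_closed j y : E j (y ^+ N) != 0 ->
  Omega_at N.-1 j y = (y - T j (y ^+ N)) * D j / E j (y ^+ N).
Proof.
have N_gt0 : (0 < N)%N by rewrite expn_gt0 ltnW // finNzRing_gt1.
elim: j y => [|j IHj] y nzE.
  rewrite /Omega_at /=; under eq_bigr do rewrite big_ord0 add0r.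
  rewrite sumr_const card_ffun card_ord expn0 mulr1n subr0 mulr1.
  have y0 : y != 0 by apply: contraNneq nzE => ->; rewrite expr0n eqn0Ngt N_gt0.
  by rewrite -{2}(prednK N_gt0) exprS; field; rewrite y0 expf_neq0.
set Y := y ^+ N in nzE *; set a := E j (w j); set b := alpha j - T j (w j).
have nza : a != 0 := nz_subspace_poly_w j.
have EY : E j.+1 Y = \prod_(c : F) (E j Y + iota c * a) by rewrite prod_addZ.
have frobN c : (y + iota c * alpha j) ^+ N = Y + iota c * w j.
  by rewrite (frobD iota) (frobZ iota).
rewrite Omega_atS
  (eq_bigr (fun c => ((y - T j Y) + iota c * b) / (E j Y + iota c * a) * D j)).
  rewrite -mulr_suml sum_frac_addZ -?EY //= -/a -/b -/Y.
  by field; rewrite nza nzE.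
move=> c _; have nzEc : E j Y + iota c * a != 0.
  by move: nzE; rewrite EY (bigD1 c) //= mulf_eq0 negb_or => /andP[].
rewrite IHj frobN ?subspace_poly_linear // interp_lin_linear.
by rewrite mulrAC; congr (_ / _ * _); rewrite /b; ring.
Qed.

End OmegaRecursion.

Section UltrametricAbs.
Variables (R : realType) (L : fieldType) (abs : L -> R).
Hypothesis habs : is_nonarch_abs abs.

Lemma abs_ge0 x : 0 <= abs x. Proof. by case: habs. Qed.
Lemma abs_eq0 x : (abs x == 0) = (x == 0). Proof. by case: habs. Qed.
Lemma absM x y : abs (x * y) = abs x * abs y. Proof. by case: habs. Qed.
Lemma abs_max x y : abs (x + y) <= Num.max (abs x) (abs y). Proof. by case: habs. Qed.

Lemma abs0 : abs 0 = 0. Proof. by apply/eqP; rewrite abs_eq0. Qed.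

Lemma abs1 : abs 1 = 1.
Proof.
have nz1 : abs 1 != 0 by rewrite abs_eq0 oner_eq0.
by apply: (mulfI nz1); rewrite -absM !mulr1.
Qed.

Lemma absN x : abs (- x) = abs x.
Proof.
have : abs (-1) ^+ 2 == 1 by rewrite -[_ ^+ 2]absM mulrNN mulr1 abs1.
rewrite sqrf_eq1 => /orP[/eqP absN1 | /eqP absN1].
  by rewrite -mulN1r absM absN1 mul1r.
by have := abs_ge0 (-1); rewrite absN1 ler0N1.
Qed.

Lemma absX x k : abs (x ^+ k) = abs x ^+ k.
Proof. by elim: k => [|k IHk]; rewrite ?abs1 // !exprS absM IHk. Qed.

Lemma absV x : abs x^-1 = (abs x)^-1.
Proof.
have [->|nzx] := eqVneq x 0; first by rewrite invr0 abs0 invr0.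
have nzax : abs x != 0 by rewrite abs_eq0.
by apply: (mulfI nzax); rewrite -absM !divff ?abs1.
Qed.

Lemma abs_le_add x y M : abs x <= M -> abs y <= M -> abs (x + y) <= M.
Proof. by move=> hx hy; apply: le_trans (abs_max x y) _; rewrite ge_max hx hy. Qed.

Lemma abs_add_dominant x y : abs y < abs x -> abs (x + y) = abs x.
Proof.
move=> hyx; apply/eqP; rewrite eq_le; apply/andP; split.
  by apply: abs_le_add => //; apply: ltW.
have := abs_max (x + y) (- y); rewrite addrK absN le_max => /orP[//|].
by rewrite leNgt hyx.
Qed.

End UltrametricAbs.

Lemma subn_mul_split (q Q : nat) : (0 < q <= Q)%N -> (q * Q - q = Q - q + Q * q.-1)%N.
Proof. by case: q => [//|q] /= le_qQ; nia. Qed.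

Section Estimates.
Variables (R : realType) (F : finFieldType) (L : fieldType) (abs : L -> R).
Variables (alpha : nat -> L) (n : nat).
Hypothesis habs : is_nonarch_abs abs.
Hypothesis alpha0 : alpha 0 = 1.
Hypothesis abs_alpha_lt : forall j, abs (alpha j) < abs (alpha j.+1).
Local Notation q := #|F|.
Local Notation N := (q ^ n)%N.
Local Notation w j := (alpha j ^+ N).
Local Notation B j := (abs (alpha j) ^+ N).
Local Notation E := (subspace_poly F (fun j => w j)).
Local Notation D := (subspace_deriv F (fun j => w j)).
Local Notation T := (interp_lin F (fun j => w j) alpha).

Lemma abs_alpha_ge1 j : 1 <= abs (alpha j).
Proof.
elim: j => [|j IHj]; first by rewrite alpha0 abs1.
exact: le_trans IHj (ltW (abs_alpha_lt j)).
Qed.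

Lemma N_gt0 : (0 < N)%N. Proof. by rewrite expn_gt0 ltnW // finNzRing_gt1. Qed.

Lemma B_ge1 j : 1 <= B j. Proof. by rewrite exprn_ege1 ?abs_alpha_ge1. Qed.

Lemma B_gt0 j : 0 < B j. Proof. exact: lt_le_trans ltr01 (B_ge1 j). Qed.

Lemma B_lt l j : (l < j)%N -> B l < B j.
Proof.
move=> lj; rewrite ltrXn2r -?lt0n ?N_gt0 ?(le_trans ler01) ?abs_alpha_ge1 //.
exact: (homo_ltn lt_trans abs_alpha_lt).
Qed.

Lemma abs_w j : abs (w j) = B j. Proof. exact: absX. Qed.

Lemma abs_alpha_le_B j : abs (alpha j) <= B j.
Proof. by rewrite -{1}(expr1 (abs (alpha j))) ler_weXn2l ?abs_alpha_ge1 ?N_gt0. Qed.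

Lemma abs_subspace_poly j Y : (forall l, (l < j)%N -> B l < abs Y) ->
  abs (E j Y) = abs Y ^+ (q ^ j).
Proof.
have [r qE] := card_finFieldSS F.
elim: j Y => [|j IHj] Y hY /=; first by rewrite expn0 expr1.
have hE : abs (E j Y) = abs Y ^+ (q ^ j) by apply: IHj => l /ltnW /hY.
have ha : abs (E j (w j)) = B j ^+ (q ^ j).
  by rewrite IHj abs_w // => l; apply: B_lt.
have hlt : abs (E j (w j)) < abs (E j Y).
  by rewrite ha hE ltrXn2r ?hY // ?(ltW (B_gt0 j)) // -lt0n expn_gt0 qE.
have Ep : 0 < abs (E j Y) := le_lt_trans (abs_ge0 habs _) hlt.
rewrite (abs_add_dominant habs); first by rewrite (absX habs) hE -exprM expnSr.
rewrite (absN habs) (absM habs) !(absX habs).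
have -> : abs (E j Y) ^+ q = abs (E j Y) ^+ q.-1 * abs (E j Y) by rewrite -exprSr qE.
by rewrite ltr_pM2r // ltrXn2r ?(abs_ge0 habs) // qE.
Qed.

Lemma abs_subspace_poly_w j : abs (E j (w j)) = B j ^+ (q ^ j).
Proof. by rewrite abs_subspace_poly abs_w // => l; apply: B_lt. Qed.

Lemma subspace_poly_w_neq0 j : E j (w j) != 0.
Proof. by rewrite -(abs_eq0 habs) abs_subspace_poly_w expf_neq0 // gt_eqF ?B_gt0. Qed.

Lemma B_le l j : (l <= j)%N -> B l <= B j.
Proof. by rewrite leq_eqVlt => /predU1P[-> // | /B_lt /ltW]. Qed.

Lemma B_expn_le l j e : (l <= j)%N -> B l ^+ e <= B j ^+ e.
Proof. by move=> lj; rewrite lerXn2r ?nnegrE ?(ltW (B_gt0 _)) ?B_le. Qed.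

Lemma card_le_expnS k : (q <= q ^ k.+1)%N.
Proof. by rewrite expnS leq_pmulr // expn_gt0 ltnW // finNzRing_gt1. Qed.

Lemma abs_subspace_deriv_le k : abs (D k.+1) <= B k ^+ (q ^ k.+1 - q).
Proof.
elim: k => [|k IHk].
  by rewrite subspace_deriv1 ?alpha0 ?expr1n // (absN habs) abs1 // expn1 subnn expr0.
rewrite subspace_derivS (absM habs) (absN habs) (absX habs) abs_subspace_poly_w -exprM.
rewrite [(q ^ k.+2)%N]expnS subn_mul_split; last first.
  by rewrite card_le_expnS andbT ltnW ?finNzRing_gt1.
rewrite exprD ler_wpM2r ?exprn_ge0 ?(abs_ge0 habs) //.
exact: le_trans IHk (B_expn_le _ (leqnSn k)).
Qed.

Lemma abs_residual_le k :
  (forall z, B k < abs z -> abs (T k.+1 z * D k.+1) <= abs z ^+ (q ^ k.+1 - q).+1) ->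
  abs ((alpha k.+1 - T k.+1 (w k.+1)) * D k.+1) <= B k.+1 ^+ (q ^ k.+1 - q).+1.
Proof.
move=> abs_TD_le; rewrite mulrBl; apply: (abs_le_add habs).
  rewrite (absM habs) exprS; apply: ler_pM; rewrite ?(abs_ge0 habs) ?abs_alpha_le_B //.
  exact: le_trans (abs_subspace_deriv_le k) (B_expn_le _ (leqnSn k)).
by rewrite (absN habs) -abs_w abs_TD_le // abs_w B_lt.
Qed.

Lemma abs_interp_lin_mul_deriv_le k z : B k < abs z ->
  abs (T k.+1 z * D k.+1) <= abs z ^+ (q ^ k.+1 - q).+1.
Proof.
have [r qE] := card_finFieldSS F.
elim: k z => [|k IHk] z hz.
  rewrite interp_lin1 ?subspace_deriv1 ?alpha0 ?expr1n // mul1r mulrN1.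
  by rewrite (absN habs) expn1 subnn expr1.
set Q := (q ^ k.+1)%N.
have z0 : 0 <= abs z := abs_ge0 habs z.
have Bz e : B k.+1 ^+ e <= abs z ^+ e.
  by apply: lerXn2r; rewrite ?nnegrE ?z0 ?(ltW (B_gt0 _)) ?(ltW hz).
have hzk : B k < abs z by apply: lt_trans hz; apply: B_lt.
have hb := le_trans (abs_residual_le IHk) (Bz _).
have hE : abs (E k.+1 z) = abs z ^+ Q.
  by rewrite abs_subspace_poly // => l lk; apply: le_lt_trans hz; apply/B_le/ltnW.
rewrite interp_lin_mul_derivS ?subspace_poly_w_neq0 // [(q ^ k.+2)%N]expnS -/Q.
rewrite subn_mul_split -?addSn; last by rewrite card_le_expnS andbT qE.
have ha_pow e : abs (E k.+1 (w k.+1)) ^+ e <= abs z ^+ (Q * e).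
  rewrite exprM; apply: lerXn2r;
    by rewrite ?nnegrE ?exprn_ge0 ?(abs_ge0 habs) ?abs_subspace_poly_w.
apply: (abs_le_add habs).
  rewrite (absM habs) (absN habs) (absX habs) exprD.
  by apply: ler_pM; rewrite ?exprn_ge0 ?(abs_ge0 habs) ?IHk ?ha_pow.
have -> : (Q * q.-1 = Q * q.-2 + Q)%N by rewrite qE mulnSr.
rewrite (absN habs) (absM habs) hE (absM habs) (absX habs) addnA !exprD.
apply: ler_pM; rewrite ?mulr_ge0 ?exprn_ge0 ?(abs_ge0 habs) //.
by apply: ler_pM; rewrite ?exprn_ge0 ?(abs_ge0 habs) ?ha_pow.
Qed.

Lemma abs_closed_form_le k :
  abs ((alpha k.+1 - T k.+1 (w k.+1)) * D k.+1 / E k.+1 (w k.+1)) <= (B k.+1 ^+ q.-1)^-1.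
Proof.
have Bq : B k.+1 ^+ (q ^ k.+1) = B k.+1 ^+ (q ^ k.+1 - q).+1 * B k.+1 ^+ q.-1.
  have q_gt0 : (0 < q)%N by rewrite ltnW ?finNzRing_gt1.
  by rewrite -exprD addSn -addnS prednK // subnK ?card_le_expnS.
rewrite (absM habs) (absV habs) abs_subspace_poly_w Bq invfM mulrA.
rewrite -[X in _ <= X]mul1r ler_wpM2r ?invr_ge0 ?exprn_ge0 ?(abs_ge0 habs) //.
rewrite ler_pdivrMr ?mul1r; last exact: exprn_gt0 (B_gt0 _).
exact: abs_residual_le (@abs_interp_lin_mul_deriv_le k).
Qed.

Lemma abs_closed_form_1 : (0 < n)%N ->
  abs ((alpha 1 - T 1 (w 1)) * D 1 / E 1 (w 1)) = (B 1 ^+ q.-1)^-1.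
Proof.
move=> n_gt0.
have nzB := lt0r_neq0 (B_gt0 1).
have alpha1_lt_B : abs (alpha 1) < B 1.
  have := abs_alpha_lt 0; rewrite alpha0 abs1 // => alpha1_gt1.
  by rewrite ltr_eXnr // -(expn0 q) ltn_exp2l ?finNzRing_gt1.
rewrite interp_lin1 ?subspace_deriv1 ?alpha0 ?expr1n // mul1r mulrN1.
rewrite (absM habs) (absV habs) abs_subspace_poly_w (absN habs) addrC.
rewrite (abs_add_dominant habs) (absN habs) abs_w // expn1.
have Bq : B 1 ^+ q = B 1 * B 1 ^+ q.-1 by rewrite -exprS prednK // ltnW ?finNzRing_gt1.
by rewrite Bq invfM mulVKf.
Qed.

End Estimates.

Section OmegaValues.
Variables (R : realType) (F : finFieldType) (L : fieldType) (iota : {rmorphism F -> L}).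
Variables (abs : L -> R) (alpha : nat -> L) (n : nat).
Hypothesis habs : is_nonarch_abs abs.
Hypothesis alpha0 : alpha 0 = 1.
Hypothesis abs_alpha_lt : forall j, abs (alpha j) < abs (alpha j.+1).
Local Notation q := #|F|.
Local Notation N := (q ^ n)%N.
Local Notation w j := (alpha j ^+ N).
Local Notation B j := (abs (alpha j) ^+ N).
Local Notation E := (subspace_poly F (fun j => w j)).
Local Notation D := (subspace_deriv F (fun j => w j)).
Local Notation T := (interp_lin F (fun j => w j) alpha).

Lemma Omega_closed i : Omega iota alpha i N.-1 = (alpha i - T i (w i)) * D i / E i (w i).
Proof.
have nzE := subspace_poly_w_neq0 F n habs alpha0 abs_alpha_lt.
exact: (Omega_at_closed iota nzE (nzE i)).
Qed.

Lemma Omega1E : Omega iota alpha 1 N.-1 = (w 1 - alpha 1) / \prod_(c : F) (iota c + w 1).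
Proof.
rewrite Omega_closed interp_lin1 ?subspace_deriv1 ?subspace_poly1 ?alpha0 ?expr1n //.
rewrite mul1r mulrN1 opprB -(prod_addC iota); congr (_ / _).
by apply: eq_bigr => c _; rewrite addrC.
Qed.

Lemma abs_Omega1 : (0 < n)%N -> abs (Omega iota alpha 1 N.-1) = (B 1 ^+ q.-1)^-1.
Proof. by move=> n_gt0; rewrite Omega_closed abs_closed_form_1. Qed.

Lemma abs_Omega_le i : (0 < i)%N -> abs (Omega iota alpha i N.-1) <= (B i ^+ q.-1)^-1.
Proof. by case: i => // k _; rewrite Omega_closed abs_closed_form_le. Qed.

End OmegaValues.

Lemma exprz_mul_subn (R : unitRingType) (x : R) (N q : nat) : (0 < q)%N ->
  x ^ (N%:Z * (1 - q%:Z)) = ((x ^+ N) ^+ q.-1)^-1.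
Proof.
move=> q_gt0; rewrite -exprM exprnN; congr (_ ^ _).
by rewrite -{1}(prednK q_gt0) PoszM -addn1 PoszD; ring.
Qed.

Theorem lemma5 (R : realType) (F : finFieldType) (L : fieldType)
  (iota : {rmorphism F -> L}) (T : L) (abs : L -> R)
  (a : {poly F}) (b : F) (f : L) (P : L -> Prop) (alpha : nat -> L) :
  is_k_infty iota T abs ->
  a \is monic -> (1 <= (size a).-1)%N -> b != 0 ->
  f ^+ 2 - evT iota T a * f - iota b = 0 ->
  ~ in_k iota T f ->
  abs f = (#|F|)%:R ^+ (size a).-1 ->
  frac_Ainf1_ideal iota T f (size a).-1 P ->
  is_Fq_basis iota P alpha ->
  1 < abs (alpha 1%N) ->
  (forall i, (1 <= i)%N -> abs (alpha i) < abs (alpha i.+1)) ->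
  forall n : nat, (1 <= n)%N ->
    (Omega iota alpha 1 (#|F| ^ n).-1 =
       (alpha 1%N ^+ (#|F| ^ n) - alpha 1%N)
         / \prod_(c : F) (iota c + alpha 1%N ^+ (#|F| ^ n))
     /\ abs (Omega iota alpha 1 (#|F| ^ n).-1) =
          abs (alpha 1%N) ^ ((#|F| ^ n)%:Z * (1 - (#|F|)%:Z)))
    /\ (forall i, (1 <= i)%N ->
          abs (Omega iota alpha i (#|F| ^ n).-1) <=
            abs (alpha i) ^ ((#|F| ^ n)%:Z * (1 - (#|F|)%:Z))).
Proof.
(* Only the ultrametric inequality, [alpha 0 = 1] and the growth of the
   [|alpha i|] are used. *)
move=> [habs _ _ _ _] _ _ _ _ _ _ _ [alpha0 _ _] alpha1_gt1 alpha_lt n n_gt0.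
have abs_alpha_lt j : abs (alpha j) < abs (alpha j.+1).
  by case: j => [|j]; rewrite ?alpha0 ?(abs1 habs) ?alpha_lt.
have q_gt0 : (0 < #|F|)%N by rewrite ltnW ?finNzRing_gt1.
rewrite !exprz_mul_subn //; split; first split.
- exact: (Omega1E iota n habs alpha0 abs_alpha_lt).
- exact: (abs_Omega1 iota habs alpha0 abs_alpha_lt n_gt0).
- move=> i i_gt0; rewrite exprz_mul_subn //.
  exact: (abs_Omega_le iota n habs alpha0 abs_alpha_lt i_gt0).
Qed.
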